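(* Let $(p_j)_{j\ge 0}$ be a probability distribution on $\mathbb N=\{0,1,2,\dots\}$ with $0<p_0+p_1<1$, probability generating function $P(z)=\sum_{j\ge0}p_jz^j$, and mean $m=P'(1)=\sum_{j\ge1}jp_j<1$. Let $G(z)=\sum_{j\ge1}g_jz^j$ be the probability generating function of the Yaglom limit $(g_j)_{j\ge1}$ of the Galton–Watson process with offspring distribution $(p_j)$. Assume $P(z)$ is analytic on the open disc $\mathcal B(0,r_P)=\{z\in\mathbb C:|z|<r_P\}$ for some $r_P>1$. Then $G(z)$ is analytic at $z=1$ if and only if there exists $r_G>1$ such that $G(z)$ is analytic on $\mathcal B(0,r_G)$.
   Context: A Galton–Watson (GW) process $\{Z_n\}_{n\ge0}$ is the Markov chain on $\mathbb N$ with $Z_n=\sum_{i=1}^{Z_{n-1}}\theta_i^{(n)}$, where the $\theta_i^{(n)}$ are i.i.d. with law $(p_j)$; state $0$ is absorbing. Since $m<1$ (subcritical case), there is a unique probability distribution $(g_j)_{j\ge1}$ on $\{1,2,\dots\}$ (the Yaglom limit) with $\lim_{n\to\infty}\mathbb P(Z_n=j\mid Z_n>0, Z_0=\ell)=g_j$ for all $\ell,j\ge1$; its generating function $G(z)=\sum_{j\ge1}g_jz^j$ is the unique probability generating function satisfying $G(0)=0$ and $G(P(z))=mG(z)+1-m$ for $z\in[0,1]$ (and hence for $|z|\le1$). *)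

From Stdlib Require Import Reals Arith.
From Coquelicot Require Import Coquelicot.
Open Scope R_scope.

Definition conv (a b : nat -> R) (n : nat) : R :=
  sum_f_R0 (fun k => a k * b (n - k)%nat) n.

Fixpoint cpow (a : nat -> R) (k : nat) : nat -> R :=
  match k with
  | O => fun j => if Nat.eqb j 0 then 1 else 0
  | S k' => conv a (cpow a k')
  end.

(* gw_law p l n j = P(Z_n = j | Z_0 = l) for the Galton-Watson process with
   offspring law p : Z_n = sum_{i=1}^{Z_{n-1}} theta_i^(n). *)
Fixpoint gw_law (p : nat -> R) (l : nat) (n : nat) : nat -> R :=
  match n with
  | O => fun j => if Nat.eqb j l then 1 else 0
  | S n' => fun j => Series (fun k => gw_law p l n' k * cpow p k j)
  end.

Definition is_yaglom_limit (p g : nat -> R) : Prop :=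
  forall l j : nat, (1 <= l)%nat -> (1 <= j)%nat ->
    is_lim_seq (fun n => gw_law p l n j / (1 - gw_law p l n 0)) (g j).

Definition analytic_at (F : C -> C) (z0 : C) : Prop :=
  exists (r : R) (a : nat -> C), 0 < r /\
    forall z : C, Cmod (z - z0) < r ->
      is_series (fun n => a n * pow_n (z - z0) n)%C (F z).

Definition gf_is (a : nat -> R) (z w : C) : Prop :=
  is_series (fun n => RtoC (a n) * pow_n z n)%C w.

(* The generating function sum a_n z^n (defined on the closed unit disc)
   is analytic at the point z0: it extends analytically to a neighbourhood
   of z0, i.e. some function analytic at z0 agrees with it on |z| < 1. *)
Definition gf_analytic_at (a : nat -> R) (z0 : C) : Prop :=
  exists F : C -> C, analytic_at F z0 /\
    forall z : C, Cmod z < 1 -> gf_is a z (F z).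

Definition gf_analytic_on_disc (a : nat -> R) (r : R) : Prop :=
  exists F : C -> C, (forall z : C, Cmod z < r -> analytic_at F z) /\
    forall z : C, Cmod z < 1 -> gf_is a z (F z).

From Stdlib Require Import Reals Arith Lra Lia.
From Coquelicot Require Import Coquelicot.
Open Scope R_scope.

(* Direction (=>) is Pringsheim's theorem.  Near 1 the generating function has an
   expansion [sum_k b_k (y - 1)^k].  Just left of 1 its k-th derivative coincides
   with that of [sum_n g_n y^n], whose coefficients are nonnegative; letting
   [y -> 1-] gives [sum_n C(n,k) g_n <= b_k], hence
   [sum_n g_n (1 + rho)^n <= sum_k b_k rho^k < oo] for small [rho > 0].
   A power series with nonnegative coefficients converging at [s > 1] is then
   analytic on [B(0,s)]: writing [z^n = (z0 + w)^n] binomially, the resulting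
   double series converges absolutely when [|z0| + |w| < s], so it may be summed
   in the other order. *)

Lemma sum_n_nonneg (a : nat -> R) N : (forall n, 0 <= a n) -> 0 <= sum_n a N.
Proof.
  intros Ha. induction N; [rewrite sum_O; auto|].
  rewrite sum_Sn. specialize (Ha (S N)). unfold plus; simpl; lra.
Qed.

Lemma sum_n_le_loc (a b : nat -> R) N :
  (forall n, (n <= N)%nat -> a n <= b n) -> sum_n a N <= sum_n b N.
Proof.
  induction N; intros H; [rewrite !sum_O; apply H; lia|].
  rewrite !sum_Sn. unfold plus; simpl. apply Rplus_le_compat; [apply IHN|]; intros; apply H; lia.
Qed.

Lemma sum_n_incr (a : nat -> R) M N :
  (forall n, 0 <= a n) -> (M <= N)%nat -> sum_n a M <= sum_n a N.
Proof.
  intros Ha HMN. induction HMN; [lra|].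
  rewrite sum_Sn. specialize (Ha (S m)). unfold plus; simpl; lra.
Qed.

Lemma term_le_sum_n (a : nat -> R) k N :
  (forall n, 0 <= a n) -> (k <= N)%nat -> a k <= sum_n a N.
Proof.
  intros Ha HkN. apply Rle_trans with (sum_n a k); [|now apply sum_n_incr].
  destruct k; [rewrite sum_O; lra|].
  rewrite sum_Sn. pose proof (sum_n_nonneg a k Ha). unfold plus; simpl; lra.
Qed.

Lemma sum_n_le_Series (a : nat -> R) N :
  (forall n, 0 <= a n) -> ex_series a -> sum_n a N <= Series a.
Proof.
  intros Ha Hex. apply is_lim_seq_incr_compare; [apply Series_correct, Hex|].
  intros n. rewrite sum_Sn. specialize (Ha (S n)). unfold plus; simpl; lra.
Qed.

Lemma ex_series_nonneg_bounded (a : nat -> R) (M : R) :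
  (forall n, 0 <= a n) -> (forall N, sum_n a N <= M) -> ex_series a.
Proof.
  intros Ha HM. destruct (ex_finite_lim_seq_incr (sum_n a) M) as [l Hl]; auto.
  - intros n. rewrite sum_Sn. specialize (Ha (S n)). unfold plus; simpl; lra.
  - now exists l.
Qed.

Lemma sum_n_zero_beyond {G : AbelianMonoid} (a : nat -> G) N M :
  (forall n, (N < n)%nat -> a n = zero) -> (N <= M)%nat -> sum_n a M = sum_n a N.
Proof.
  intros Ha HNM. induction HNM; [reflexivity|].
  rewrite sum_Sn, IHHNM, Ha by lia. apply plus_zero_r.
Qed.

Lemma sum_n_S_l {G : AbelianMonoid} (a : nat -> G) M :
  sum_n a (S M) = plus (a 0%nat) (sum_n (fun j => a (S j)) M).
Proof. unfold sum_n. rewrite sum_Sn_m by lia. now rewrite sum_n_m_S. Qed.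

Lemma sum_n_from (h : nat -> R) i d :
  sum_n (fun N => if (i <=? N)%nat then h N else 0) (i + d) = sum_n (fun j => h (j + i)%nat) d.
Proof.
  revert h; induction i; intros h.
  - apply sum_n_ext. intros j. now rewrite Nat.add_0_r.
  - rewrite Nat.add_succ_l, sum_n_S_l. simpl. unfold plus at 1; simpl. rewrite Rplus_0_l.
    etransitivity; [exact (IHi (fun N => h (S N)))|].
    apply sum_n_ext. intros j. f_equal. lia.
Qed.

(* The generic [sum_n_plus] and [sum_n_mult_l] are stated with [plus] and [mult],
   so they do not rewrite sums written with [Rmult], [Cplus] or [Cmult]. *)
Lemma sum_n_Rmult_l (c : R) (u : nat -> R) n : sum_n (fun k => c * u k) n = c * sum_n u n.
Proof. exact (sum_n_mult_l c u n). Qed.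

Lemma sum_n_Cplus (u v : nat -> C) n :
  sum_n (fun k => u k + v k)%C n = (sum_n u n + sum_n v n)%C.
Proof. exact (sum_n_plus u v n). Qed.

Lemma sum_n_Cmult_l (c : C) (u : nat -> C) n : sum_n (fun k => c * u k)%C n = (c * sum_n u n)%C.
Proof. exact (sum_n_mult_l c u n). Qed.

Ltac unfold_C_ops :=
  simpl; unfold plus, mult, zero, one; simpl; match goal with |- ?a = ?b => change (@eq C a b) end.

Lemma sum_n_Re (a : nat -> C) n : Re (sum_n a n) = sum_n (fun k => Re (a k)) n.
Proof. induction n; [rewrite !sum_O | rewrite !sum_Sn, <- IHn]; reflexivity. Qed.

Lemma sum_n_Im (a : nat -> C) n : Im (sum_n a n) = sum_n (fun k => Im (a k)) n.
Proof. induction n; [rewrite !sum_O | rewrite !sum_Sn, <- IHn]; reflexivity. Qed.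

Lemma is_series_C_iff (a : nat -> C) (l : C) :
  is_series a l <->
  is_series (fun n => Re (a n)) (Re l) /\ is_series (fun n => Im (a n)) (Im l).
Proof.
  unfold is_series. split.
  - intros H. pose proof (proj1 (filterlim_locally _ _) H) as Hball.
    split; apply filterlim_locally; intros eps; destruct (Hball eps) as [N HN];
      exists N; intros n Hn; destruct (HN n Hn) as [HRe HIm].
    + change (ball (Re l) eps (Re (sum_n a n))) in HRe. now rewrite sum_n_Re in HRe.
    + change (ball (Im l) eps (Im (sum_n a n))) in HIm. now rewrite sum_n_Im in HIm.
  - intros [HRe HIm]. apply filterlim_locally. intros eps.
    destruct (proj1 (filterlim_locally _ _) HRe eps) as [N1 HN1].
    destruct (proj1 (filterlim_locally _ _) HIm eps) as [N2 HN2].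
    exists (max N1 N2); intros n Hn; split.
    + change (ball (Re l) eps (Re (sum_n a n))). rewrite sum_n_Re. apply HN1. lia.
    + change (ball (Im l) eps (Im (sum_n a n))). rewrite sum_n_Im. apply HN2. lia.
Qed.

(* Coquelicot's [Series] is real-valued only. *)
Definition CSeries (a : nat -> C) : C :=
  (Series (fun n => Re (a n)), Series (fun n => Im (a n))).

Lemma CSeries_correct (a : nat -> C) : ex_series a -> is_series a (CSeries a).
Proof.
  intros [l Hl]. destruct (proj1 (is_series_C_iff a l) Hl) as [HRe HIm].
  unfold CSeries. rewrite (is_series_unique _ _ HRe), (is_series_unique _ _ HIm).
  now destruct l.
Qed.

Lemma Im_le_Cmod (c : C) : Rabs (Im c) <= Cmod c.
Proof.
  destruct c as [x y]. unfold Cmod; simpl. rewrite <- sqrt_Rsqr_abs.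
  apply sqrt_le_1_alt. unfold Rsqr. nra.
Qed.

Lemma Cmod_pow_n (z : C) n : Cmod (pow_n z n) = Cmod z ^ n.
Proof.
  induction n; simpl; [apply Cmod_1|].
  change (Cmod (z * pow_n z n)%C = Cmod z * Cmod z ^ n). now rewrite Cmod_mult, IHn.
Qed.

Lemma pow_n_RtoC (x : R) n : pow_n (RtoC x) n = RtoC (x ^ n).
Proof.
  induction n; simpl; [reflexivity|]. rewrite IHn.
  unfold mult; simpl; unfold Cmult, RtoC; simpl. f_equal; ring.
Qed.

Lemma Re_mult_RtoC (a : C) (t : R) : Re (a * RtoC t)%C = Re a * t.
Proof. destruct a; simpl; ring. Qed.

Lemma is_series_Re_pseries_RtoC (a : nat -> C) (x : R) (l : C) :
  is_series (fun n => a n * pow_n (RtoC x) n)%C l ->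
  is_series (fun n => Re (a n) * x ^ n) (Re l).
Proof.
  intros H. apply is_series_C_iff in H as [HRe _].
  eapply is_series_ext; [|exact HRe]. intros n. cbv beta. now rewrite pow_n_RtoC, Re_mult_RtoC.
Qed.

Lemma is_series_sum_n (f : nat -> nat -> R) (L : nat -> R) :
  (forall k, is_series (fun n => f n k) (L k)) ->
  forall M, is_series (fun n => sum_n (f n) M) (sum_n L M).
Proof.
  intros HL M. induction M.
  - rewrite sum_O. eapply is_series_ext; [|apply (HL 0%nat)]. intros n. now rewrite sum_O.
  - rewrite sum_Sn. eapply is_series_ext; [|apply (is_series_plus _ _ _ _ IHM (HL (S M)))].
    intros n. now rewrite sum_Sn.
Qed.

Lemma is_lim_seq_Series_tail (a : nat -> R) :
  ex_series a -> is_lim_seq (fun M => Series (fun j => a (S M + j)%nat)) 0.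
Proof.
  intros Ha. apply is_lim_seq_ext with (fun M => Series a - sum_n a M).
  - intros M. rewrite (Series_incr_n a (S M)), <- sum_n_Reals by (lia || auto).
    simpl. ring.
  - replace 0 with (Series a - Series a) by ring.
    apply is_lim_seq_minus'; [apply is_lim_seq_const | apply Series_correct, Ha].
Qed.

Lemma is_series_swap_triangular (f : nat -> nat -> R) (beta L : nat -> R) (T : R) :
  (forall n k, (n < k)%nat -> f n k = 0) ->
  (forall n M, sum_n (fun k => Rabs (f n k)) M <= beta n) ->
  ex_series beta ->
  (forall k, is_series (fun n => f n k) (L k)) ->
  is_series (fun n => sum_n (f n) n) T ->
  is_series L T.
Proof.
  intros Hf Hdom Hbeta HL HT.
  assert (Hrow : forall n M, Rabs (sum_n (f n) M) <= beta n).
  { intros n M. eapply Rle_trans; [|apply (Hdom n M)]. clear.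
    induction M; rewrite !sum_O || rewrite !sum_Sn; [lra|].
    eapply Rle_trans; [apply Rabs_triang|]. unfold plus; simpl; lra. }
  assert (Hbeta_nonneg : forall n, 0 <= beta n)
    by (intros n; eapply Rle_trans; [apply Rabs_pos | apply (Hrow n 0%nat)]).
  (* up to [M], the column sums and the row sums differ by the rows beyond [M] *)
  assert (Hdiff : forall M, Rabs (sum_n L M - sum_n (fun n => sum_n (f n) n) M)
                            <= Series (fun j => beta (S M + j)%nat)).
  { intros M.
    rewrite <- (is_series_unique _ _ (is_series_sum_n f L HL M)).
    rewrite (Series_incr_n _ (S M)), <- sum_n_Reals by (lia || eexists; apply is_series_sum_n, HL).
    simpl pred.
    rewrite (sum_n_ext_loc (fun n => sum_n (f n) M) (fun n => sum_n (f n) n) M)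
      by (intros n Hn; apply sum_n_zero_beyond; auto; intros; apply Hf; lia).
    replace (_ + _ - _) with (Series (fun j => sum_n (f (S M + j)%nat) M)) by ring.
    assert (Htail : ex_series (fun j => beta (S M + j)%nat)) by (apply ex_series_incr_n; auto).
    eapply Rle_trans; [apply Series_Rabs|].
    - apply (@ex_series_le R_AbsRing R_CompleteNormedModule) with (2 := Htail).
      intros n. unfold norm; simpl; unfold abs; simpl. rewrite Rabs_Rabsolu. apply Hrow.
    - apply Series_le; auto. intros n. split; [apply Rabs_pos | apply Hrow]. }
  assert (Hlim : is_lim_seq (fun M => sum_n L M - sum_n (fun n => sum_n (f n) n) M) 0).
  { pose proof (is_lim_seq_Series_tail beta Hbeta) as Htail.
    apply is_lim_seq_le_le with (fun M => - Series (fun j => beta (S M + j)%nat))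
                                (fun M => Series (fun j => beta (S M + j)%nat)); auto.
    - intros M. specialize (Hdiff M). apply Rabs_le_between in Hdiff. lra.
    - apply is_lim_seq_opp in Htail. simpl in Htail. now rewrite Ropp_0 in Htail. }
  apply (is_lim_seq_plus' _ _ _ _ HT) in Hlim. rewrite Rplus_0_r in Hlim.
  change (is_lim_seq (sum_n L) T).
  eapply is_lim_seq_ext; [|exact Hlim]. intros M. apply Rplus_minus.
Qed.

Lemma is_series_swap_triangular_C (f : nat -> nat -> C) (beta : nat -> R) (L : nat -> C) (T : C) :
  (forall n k, (n < k)%nat -> f n k = RtoC 0) ->
  (forall n M, sum_n (fun k => Cmod (f n k)) M <= beta n) ->
  ex_series beta ->
  (forall k, is_series (fun n => f n k) (L k)) ->
  is_series (fun n => sum_n (f n) n) T ->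
  is_series L T.
Proof.
  intros Hf Hdom Hbeta HL HT.
  apply is_series_C_iff in HT as [HTRe HTIm].
  apply is_series_C_iff; split.
  - apply is_series_swap_triangular with (fun n k => Re (f n k)) beta; auto.
    + intros n k Hnk. now rewrite Hf.
    + intros n M. eapply Rle_trans; [|apply (Hdom n M)].
      apply sum_n_le_loc. intros; apply re_le_Cmod.
    + intros k. apply (is_series_C_iff _ _), HL.
    + eapply is_series_ext; [|exact HTRe]. intros n. apply sum_n_Re.
  - apply is_series_swap_triangular with (fun n k => Im (f n k)) beta; auto.
    + intros n k Hnk. now rewrite Hf.
    + intros n M. eapply Rle_trans; [|apply (Hdom n M)].
      apply sum_n_le_loc. intros; apply Im_le_Cmod.
    + intros k. apply (is_series_C_iff _ _), HL.
    + eapply is_series_ext; [|exact HTIm]. intros n. apply sum_n_Im.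
Qed.

(* [binom_coef x n k] is the coefficient of [w^k] in [(x + w)^n], i.e. [C(n,k) x^(n-k)]
   (and [0] when [k > n]), defined by Pascal's rule so that it makes sense in any ring. *)
Fixpoint binom_coef {K : Ring} (x : K) (n k : nat) : K :=
  match n with
  | O => match k with O => one | S _ => zero end
  | S n' => plus (mult x (binom_coef x n' k))
                 (match k with O => zero | S k' => binom_coef x n' k' end)
  end.

Lemma binom_coef_gt {K : Ring} (x : K) n k : (n < k)%nat -> binom_coef x n k = zero.
Proof.
  revert k; induction n; intros k Hk; simpl.
  - destruct k; [lia | reflexivity].
  - destruct k; [lia|]. rewrite !IHn by lia. now rewrite mult_zero_r, plus_zero_l.
Qed.

Lemma binom_coef_RtoC (x : R) n k : binom_coef (RtoC x) n k = RtoC (binom_coef x n k).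
Proof.
  revert k; induction n; intros k; simpl; [now destruct k|].
  destruct k; rewrite !IHn; apply injective_projections; simpl;
    unfold plus, mult, zero; simpl; ring.
Qed.

Lemma binom_coef_nonneg (x : R) n k : 0 <= x -> 0 <= binom_coef x n k.
Proof.
  intros Hx. revert k; induction n; intros k; simpl; unfold plus, mult, zero, one; simpl.
  - destruct k; lra.
  - destruct k; [specialize (IHn 0%nat); nra|].
    pose proof (IHn (S k)); pose proof (IHn k). nra.
Qed.

Lemma Cmod_binom_coef_le (z : C) n k : Cmod (binom_coef z n k) <= binom_coef (Cmod z) n k.
Proof.
  revert k; induction n; intros k; simpl.
  - destruct k; apply Req_le; [exact Cmod_1 | exact Cmod_0].
  - eapply Rle_trans; [apply Cmod_triangle|].
    change (Cmod (z * binom_coef z n k)%C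
              + Cmod (match k with O => zero | S k' => binom_coef z n k' end)
            <= Cmod z * binom_coef (Cmod z) n k
              + match k with O => 0 | S k' => binom_coef (Cmod z) n k' end).
    rewrite Cmod_mult. apply Rplus_le_compat.
    + apply Rmult_le_compat_l; [apply Cmod_ge_0 | apply IHn].
    + destruct k; [apply Req_le, Cmod_0 | apply IHn].
Qed.

Lemma sum_n_binom_coef_C (z w : C) n M : (n <= M)%nat ->
  sum_n (fun k => binom_coef z n k * pow_n w k)%C M = pow_n (z + w)%C n.
Proof.
  revert M; induction n; intros M HM.
  - rewrite (sum_n_zero_beyond _ 0), sum_O; [unfold_C_ops; ring | |lia].
    intros k Hk. rewrite binom_coef_gt by lia. exact (@mult_zero_l C_Ring _).
  - destruct M as [|M]; [lia|].
    transitivity (sum_n (fun k => z * (binom_coef z n k * pow_n w k)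
        + (match k with O => RtoC 0 | S k' => binom_coef z n k' end) * pow_n w k)%C (S M)).
    { apply sum_n_ext. intros [|k]; unfold_C_ops; ring. }
    rewrite sum_n_Cplus, sum_n_Cmult_l, IHn, sum_n_S_l by lia.
    rewrite (sum_n_ext _ (fun j => w * (binom_coef z n j * pow_n w j))%C)
      by (intros j; unfold_C_ops; ring).
    rewrite sum_n_Cmult_l, IHn by lia. unfold_C_ops. ring.
Qed.

Lemma sum_n_binom_coef (x y : R) n M : (n <= M)%nat ->
  sum_n (fun k => binom_coef x n k * y ^ k) M = (x + y) ^ n.
Proof.
  intros HM. pose proof (f_equal Re (sum_n_binom_coef_C (RtoC x) (RtoC y) n M HM)) as H.
  rewrite sum_n_Re in H.
  replace (RtoC x + RtoC y)%C with (RtoC (x + y)) in H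
    by (apply injective_projections; simpl; ring).
  rewrite pow_n_RtoC in H. simpl in H. rewrite <- H.
  apply sum_n_ext. intros k. rewrite binom_coef_RtoC, pow_n_RtoC. simpl. ring.
Qed.

Lemma binom_coef_pow_le (x y : R) n k : 0 <= x -> 0 <= y ->
  binom_coef x n k * y ^ k <= (x + y) ^ n.
Proof.
  intros Hx Hy. rewrite <- (sum_n_binom_coef x y n (max n k)) by lia.
  apply (term_le_sum_n (fun j => binom_coef x n j * y ^ j)); [|lia].
  intros j. apply Rmult_le_pos; [apply binom_coef_nonneg, Hx | apply pow_le, Hy].
Qed.

Section Recentering.

Variables (g : nat -> R) (s : R).
Hypothesis g_nonneg : forall n, 0 <= g n.
Hypothesis g_summable : ex_series (fun n => g n * s ^ n).

Let GF (z : C) : C := CSeries (fun n => RtoC (g n) * pow_n z n)%C.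

Lemma is_series_GF (z : C) : Cmod z <= s -> gf_is g z (GF z).
Proof.
  intros Hz. apply CSeries_correct.
  apply (@ex_series_le C_AbsRing C_CompleteNormedModule) with (2 := g_summable).
  intros n. change (Cmod (RtoC (g n) * pow_n z n)%C <= g n * s ^ n).
  rewrite Cmod_mult, Cmod_R, Cmod_pow_n, Rabs_pos_eq by auto.
  apply Rmult_le_compat_l; auto. apply pow_incr. split; [apply Cmod_ge_0 | exact Hz].
Qed.

Let taylor_coef (z0 : C) (k : nat) : C :=
  CSeries (fun n => RtoC (g n) * binom_coef z0 n k)%C.

Lemma ex_series_taylor_coef (z0 : C) k : Cmod z0 < s ->
  ex_series (fun n => RtoC (g n) * binom_coef z0 n k)%C.
Proof.
  intros Hz0. set (r0 := s - Cmod z0). assert (Hr0 : 0 < r0) by (unfold r0; lra).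
  apply (@ex_series_le C_AbsRing C_CompleteNormedModule) with (fun n => g n * s ^ n * / r0 ^ k).
  2:{ now apply ex_series_scal_r. }
  intros n. change (Cmod (RtoC (g n) * binom_coef z0 n k)%C <= g n * s ^ n * / r0 ^ k).
  rewrite Cmod_mult, Cmod_R, Rabs_pos_eq, Rmult_assoc by auto.
  apply Rmult_le_compat_l; auto.
  eapply Rle_trans; [apply Cmod_binom_coef_le|].
  pose proof (pow_lt r0 k Hr0).
  apply Rmult_le_reg_r with (r0 ^ k); auto.
  rewrite Rmult_assoc, Rinv_l, Rmult_1_r by lra.
  replace s with (Cmod z0 + r0) by (unfold r0; ring).
  apply binom_coef_pow_le; [apply Cmod_ge_0 | lra].
Qed.

Lemma is_series_taylor (z0 z : C) : Cmod (z - z0) < s - Cmod z0 ->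
  is_series (fun k => taylor_coef z0 k * pow_n (z - z0) k)%C (GF z).
Proof.
  intros Hz. set (w := (z - z0)%C) in *.
  pose proof (Cmod_ge_0 w). pose proof (Cmod_ge_0 z0).
  apply is_series_swap_triangular_C with
    (f := fun n k => (RtoC (g n) * binom_coef z0 n k * pow_n w k)%C) (beta := fun n => g n * s ^ n);
    auto.
  - intros n k Hnk. rewrite binom_coef_gt by lia. unfold_C_ops. ring.
  - intros n M.
    apply Rle_trans with (g n * sum_n (fun k => binom_coef (Cmod z0) n k * Cmod w ^ k) (max M n)).
    + rewrite <- sum_n_Rmult_l.
      apply Rle_trans with (sum_n (fun k => g n * (binom_coef (Cmod z0) n k * Cmod w ^ k)) M).
      * apply sum_n_le_loc. intros k _.
        rewrite !Cmod_mult, Cmod_R, Rabs_pos_eq, Cmod_pow_n, Rmult_assoc by auto.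
        apply Rmult_le_compat_l; auto. apply Rmult_le_compat_r; [apply pow_le; lra|].
        apply Cmod_binom_coef_le.
      * apply sum_n_incr; [|lia]. intros k. apply Rmult_le_pos; auto.
        apply Rmult_le_pos; [apply binom_coef_nonneg; lra | apply pow_le; lra].
    + rewrite sum_n_binom_coef by lia. apply Rmult_le_compat_l; auto.
      apply pow_incr. lra.
  - intros k.
    pose proof (CSeries_correct _ (ex_series_taylor_coef z0 k ltac:(lra))) as Hcoef.
    apply (is_series_scal_l (pow_n w k)) in Hcoef.
    change (is_series (fun n => pow_n w k * (RtoC (g n) * binom_coef z0 n k))%C
                      (pow_n w k * taylor_coef z0 k)%C) in Hcoef.
    rewrite Cmult_comm in Hcoef.
    eapply is_series_ext; [|exact Hcoef]. intros n. unfold_C_ops. ring.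
  - eapply is_series_ext; [|apply is_series_GF].
    + intros n. symmetry.
      rewrite (sum_n_ext _ (fun k => RtoC (g n) * (binom_coef z0 n k * pow_n w k))%C)
        by (intros; unfold_C_ops; ring).
      rewrite sum_n_Cmult_l, sum_n_binom_coef_C by lia. unfold w. f_equal. f_equal. ring.
    + replace z with (z0 + w)%C by (unfold w; ring).
      eapply Rle_trans; [apply Cmod_triangle | lra].
Qed.

Lemma gf_analytic_on_disc_of_summable : 1 <= s -> gf_analytic_on_disc g s.
Proof.
  intros Hs. exists GF. split.
  - intros z0 Hz0. exists (s - Cmod z0), (taylor_coef z0). split; [lra|].
    intros z Hz. now apply is_series_taylor.
  - intros z Hz. apply is_series_GF. lra.
Qed.

End Recentering.

Lemma Rbar_lt_CV_radius (a : nat -> R) (rho : R) :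
  (forall x, Rabs x < rho -> ex_series (fun n => a n * x ^ n)) ->
  forall y, Rabs y < rho -> Rbar_lt (Rabs y) (CV_radius a).
Proof.
  intros Ha y Hy. pose proof (Rabs_pos y).
  destruct (Rbar_lt_le_dec (Rabs y) (CV_radius a)) as [Hlt|Hle]; [exact Hlt|].
  set (x := (Rabs y + rho) / 2).
  assert (Hx : Rabs x = x) by (apply Rabs_pos_eq; unfold x; lra).
  exfalso. apply (CV_disk_outside a x).
  - eapply Rbar_le_lt_trans; [exact Hle|]. rewrite Hx. simpl. unfold x. lra.
  - apply ex_series_lim_0, Ha. rewrite Hx. unfold x. lra.
Qed.

Lemma pow_sum_n_le_PSeries (c : nat -> R) (y : R) J :
  (forall n, 0 <= c n) -> 0 <= y <= 1 -> Rbar_lt (Rabs y) (CV_radius c) ->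
  y ^ J * sum_n c J <= PSeries c y.
Proof.
  intros Hc Hy Hrad.
  assert (Hterm : forall n, 0 <= c n * y ^ n)
    by (intros; apply Rmult_le_pos; [apply Hc | apply pow_le; lra]).
  apply Rle_trans with (sum_n (fun n => c n * y ^ n) J).
  - rewrite <- sum_n_Rmult_l. apply sum_n_le_loc. intros n Hn.
    rewrite Rmult_comm. apply Rmult_le_compat_l; [apply Hc|].
    replace J with (n + (J - n))%nat by lia. rewrite pow_add.
    pose proof (pow_le y n ltac:(lra)). pose proof (pow_incr y 1 (J - n) ltac:(lra)).
    rewrite pow1 in *. nra.
  - apply sum_n_le_Series; [exact Hterm|].
    apply (ex_series_Rabs), CV_disk_inside, Hrad.
Qed.

Lemma continuous_le_from_left (f h : R -> R) (x : R) :
  continuity_pt f x -> continuity_pt h x -> at_left x (fun y => f y <= h y) -> f x <= h x.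
Proof.
  intros Hf Hh Hle.
  assert (Hleft : forall u : R -> R, continuity_pt u x -> filterlim u (at_left x) (locally (u x))).
  { intros u Hu. apply continuity_pt_filterlim in Hu.
    eapply filterlim_filter_le_1; [|exact Hu]. intros P HP. unfold at_left, within.
    apply (filter_imp P); [intros y Py _; exact Py | exact HP]. }
  exact (filterlim_le (F := at_left x) f h (f x) (h x) Hle (Hleft f Hf) (Hleft h Hh)).
Qed.

Lemma PS_derive_n_binomial (a : nat -> R) k j :
  PS_derive_n k a j = INR (fact k) * (Binomial.C (j + k) k * a (j + k)%nat).
Proof.
  unfold PS_derive_n, Binomial.C. replace (j + k - k)%nat with j by lia.
  pose proof (INR_fact_neq_0 k). pose proof (INR_fact_neq_0 j). field. auto.
Qed.

Lemma binomial_C_nonneg n k : 0 <= Binomial.C n k.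
Proof.
  unfold Binomial.C. pose proof (INR_fact_lt_0 n). pose proof (INR_fact_lt_0 k).
  pose proof (INR_fact_lt_0 (n - k)). apply Rlt_le, Rdiv_lt_0_compat; [lra | nra].
Qed.

Lemma sum_n_one_plus_pow (g : nat -> R) (rho : R) M :
  sum_n (fun N => g N * (1 + rho) ^ N) M
  = sum_n (fun i => rho ^ i * sum_n (fun j => Binomial.C (j + i) i * g (j + i)%nat) (M - i)) M.
Proof.
  set (e := fun N i => if (i <=? N)%nat then g N * Binomial.C N i * rho ^ i else 0).
  transitivity (sum_n (fun N => sum_n (e N) M) M).
  - apply sum_n_ext_loc. intros N HN.
    rewrite (sum_n_zero_beyond (e N) N M)
      by (lia || (intros i Hi; unfold e; destruct (Nat.leb_spec i N); [lia | reflexivity])).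
    rewrite Rplus_comm, binomial, <- sum_n_Reals, <- sum_n_Rmult_l.
    apply sum_n_ext_loc. intros i Hi. unfold e. destruct (Nat.leb_spec i N); [|lia].
    rewrite pow1. simpl. ring.
  - rewrite sum_n_switch. apply sum_n_ext_loc. intros i Hi.
    replace M with (i + (M - i))%nat at 1 by lia.
    unfold e. rewrite (sum_n_from (fun N => g N * Binomial.C N i * rho ^ i)), <- sum_n_Rmult_l.
    apply sum_n_ext. intros j. simpl. ring.
Qed.

Section Pringsheim.

Variables (g b : nat -> R) (r : R) (f : R -> R).
Hypothesis r_pos : 0 < r.
Hypothesis g_nonneg : forall n, 0 <= g n.
Hypothesis f_near_1 : forall y, Rabs (y - 1) < r -> is_series (fun n => b n * (y - 1) ^ n) (f y).
Hypothesis f_near_0 : forall y, Rabs y < 1 -> is_series (fun n => g n * y ^ n) (f y).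

Lemma CV_radius_g y : Rabs y < 1 -> Rbar_lt (Rabs y) (CV_radius g).
Proof. apply Rbar_lt_CV_radius. intros x Hx. eexists. now apply f_near_0. Qed.

Lemma CV_radius_b y : Rabs y < r -> Rbar_lt (Rabs y) (CV_radius b).
Proof.
  apply Rbar_lt_CV_radius. intros x Hx. exists (f (x + 1)).
  pose proof (f_near_1 (x + 1)) as H. replace (x + 1 - 1) with x in H by ring. auto.
Qed.

Lemma PSeries_derive_n_agree k y : 0 < y -> 1 - r < y < 1 ->
  PSeries (PS_derive_n k g) y = PSeries (PS_derive_n k b) (y - 1).
Proof.
  intros Hy0 Hy.
  rewrite <- Derive_n_PSeries by (apply CV_radius_g; rewrite Rabs_pos_eq; lra).
  rewrite <- Derive_n_PSeries by (apply CV_radius_b; rewrite Rabs_left; lra).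
  replace (y - 1) with (y + -1) by ring. rewrite <- Derive_n_comp_trans.
  apply Derive_n_ext_loc.
  set (eps := Rmin (Rmin y (y - (1 - r))) (1 - y)).
  assert (Heps : 0 < eps) by (repeat apply Rmin_pos; lra).
  exists (mkposreal _ Heps). intros u Hu. change (Rabs (u + - y) < eps) in Hu.
  apply Rabs_def2 in Hu. unfold eps in Hu.
  pose proof (Rmin_l (Rmin y (y - (1 - r))) (1 - y)).
  pose proof (Rmin_r (Rmin y (y - (1 - r))) (1 - y)).
  pose proof (Rmin_l y (y - (1 - r))). pose proof (Rmin_r y (y - (1 - r))).
  unfold PSeries. replace (u + -1) with (u - 1) by ring.
  rewrite (is_series_unique _ _ (f_near_0 u ltac:(rewrite Rabs_pos_eq; lra))).
  now rewrite (is_series_unique _ _ (f_near_1 u ltac:(rewrite Rabs_left; lra))).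
Qed.

(* With [d] the (nonnegative) coefficients of the k-th derivative of [sum_n g_n y^n], let
   [y -> 1-] in [y^J * sum_(j <= J) d_j <= sum_j d_j y^j]: near 1 the right side is the
   k-th derivative of the expansion at 1, whose value at 1 is [k! b_k]. *)
Lemma sum_n_binomial_le_taylor_coef k J :
  sum_n (fun j => Binomial.C (j + k) k * g (j + k)%nat) J <= b k.
Proof.
  set (D := PSeries (PS_derive_n k b)).
  assert (Hderiv_nonneg : forall j, 0 <= PS_derive_n k g j).
  { intros j. rewrite PS_derive_n_binomial.
    apply Rmult_le_pos; [apply pos_INR | apply Rmult_le_pos; [apply binomial_C_nonneg | auto]]. }
  assert (Hle : 1 ^ J * sum_n (PS_derive_n k g) J <= D (1 - 1)).
  { apply (continuous_le_from_left (fun y => y ^ J * sum_n (PS_derive_n k g) J)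
                                    (fun y => D (y - 1))).
    - apply derivable_continuous_pt; reg.
    - apply (continuity_pt_comp (fun y => y - 1) D); [reg|].
      apply PSeries_continuity. rewrite CV_radius_derive_n. apply CV_radius_b.
      rewrite Rminus_diag, Rabs_R0. lra.
    - assert (Heps : 0 < Rmin r 1) by (apply Rmin_pos; lra).
      exists (mkposreal _ Heps). intros y Hy Hy1. change (Rabs (y + - 1) < Rmin r 1) in Hy.
      apply Rabs_def2 in Hy. pose proof (Rmin_l r 1). pose proof (Rmin_r r 1).
      unfold D. rewrite <- PSeries_derive_n_agree by lra.
      apply pow_sum_n_le_PSeries; [auto | lra |].
      rewrite CV_radius_derive_n. apply CV_radius_g. rewrite Rabs_pos_eq; lra. }
  unfold D in Hle. rewrite pow1, Rmult_1_l, Rminus_diag, PSeries_0, PS_derive_n_binomial in Hle.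
  rewrite (sum_n_ext _ _ _ (PS_derive_n_binomial g k)), sum_n_Rmult_l in Hle.
  replace (Binomial.C (0 + k) k) with 1 in Hle
    by (unfold Binomial.C; rewrite Nat.add_sub; simpl; field; apply INR_fact_neq_0).
  rewrite Rmult_1_l in Hle.
  apply Rmult_le_reg_l with (INR (fact k)); [apply INR_fact_lt_0 | exact Hle].
Qed.

Lemma ex_series_beyond_1 : exists s, 1 < s /\ ex_series (fun n => g n * s ^ n).
Proof.
  set (rho := r / 2).
  assert (Hb : forall k, 0 <= b k).
  { intros k. eapply Rle_trans; [|apply (sum_n_binomial_le_taylor_coef k 0)].
    rewrite sum_O. apply Rmult_le_pos; [apply binomial_C_nonneg | auto]. }
  assert (Hterm : forall k, 0 <= b k * rho ^ k)
    by (intros k; apply Rmult_le_pos; [auto | apply pow_le; unfold rho; lra]).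
  assert (Hsum : ex_series (fun k => b k * rho ^ k)).
  { exists (f (1 + rho)). pose proof (f_near_1 (1 + rho)) as H.
    replace (1 + rho - 1) with rho in H by ring. apply H. rewrite Rabs_pos_eq; unfold rho; lra. }
  exists (1 + rho). split; [unfold rho; lra|].
  apply ex_series_nonneg_bounded with (Series (fun k => b k * rho ^ k)).
  - intros n. apply Rmult_le_pos; [auto | apply pow_le; unfold rho; lra].
  - intros M. rewrite sum_n_one_plus_pow.
    eapply Rle_trans; [|apply (sum_n_le_Series _ M Hterm Hsum)].
    apply sum_n_le_loc. intros i _. rewrite Rmult_comm.
    apply Rmult_le_compat_r; [apply pow_le; unfold rho; lra | apply sum_n_binomial_le_taylor_coef].
Qed.

End Pringsheim.

Lemma pringsheim (g : nat -> R) : (forall n, 0 <= g n) -> gf_analytic_at g (RtoC 1) ->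
  exists s, 1 < s /\ ex_series (fun n => g n * s ^ n).
Proof.
  intros Hg [F [[r [a [Hr HF1]]] HF0]].
  apply (ex_series_beyond_1 g (fun n => Re (a n)) r (fun y => Re (F (RtoC y)))); auto.
  - intros y Hy. pose proof (HF1 (RtoC y)) as H.
    replace (RtoC y - RtoC 1)%C with (RtoC (y - 1)) in H
      by (apply injective_projections; simpl; ring).
    rewrite Cmod_R in H. exact (is_series_Re_pseries_RtoC _ _ _ (H Hy)).
  - intros y Hy. apply (is_series_Re_pseries_RtoC (fun n => RtoC (g n))), HF0. now rewrite Cmod_R.
Qed.

Theorem proposition2p1
  (p g : nat -> R) (m rP : R)
  (hp_nonneg : forall j, 0 <= p j)
  (hp_sum : is_series p 1)
  (hp01 : 0 < p 0%nat + p 1%nat < 1)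
  (hm : is_series (fun j => INR j * p j) m)
  (hm1 : m < 1)
  (hrP : 1 < rP)
  (hP : gf_analytic_on_disc p rP)
  (hg0 : g 0%nat = 0)
  (hg_nonneg : forall j, 0 <= g j)
  (hg_sum : is_series g 1)
  (hg_yaglom : is_yaglom_limit p g) :
  gf_analytic_at g (RtoC 1) <->
  exists rG : R, 1 < rG /\ gf_analytic_on_disc g rG.
Proof.
  split.
  - intros Hg1. destruct (pringsheim g hg_nonneg Hg1) as [s [Hs Hsum]].
    exists s. split; [exact Hs|]. apply gf_analytic_on_disc_of_summable; auto; lra.
  - intros [rG [HrG [F [HF Hagree]]]]. exists F. split; [|exact Hagree].
    apply HF. rewrite Cmod_R, Rabs_R1. exact HrG.
Qed.
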